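(* $\Lambda\cap(l-\psi)\Lambda_\wedge=(l-\psi)\Lambda$.
   Context: Let $l$ be an odd prime, $\Lambda=\mathbb{Z}_l[[T]]$, and $\Lambda_\wedge=\{\sum_{k\in\mathbb{Z}}x_kT^k: x_k\in\mathbb{Z}_l,\ x_k\to0 \text{ as } k\to-\infty\}$ (the $l$-adic completion of the localization of $\Lambda$ at the prime ideal $l\Lambda$), containing $\Lambda$. Let $\psi:\Lambda_\wedge\to\Lambda_\wedge$ be the continuous $\mathbb{Z}_l$-algebra endomorphism with $\psi(T)=(1+T)^l-1$ (so $\psi(T^{-1})=((1+T)^l-1)^{-1}$). $(l-\psi)x=lx-\psi(x)$. *)

From HB Require Import structures.
From mathcomp Require Import all_boot all_order all_algebra.
Set Implicit Arguments. Unset Strict Implicit. Unset Printing Implicit Defensive.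
Import Order.TTheory GRing.Theory Num.Theory.
Local Open Scope ring_scope.

(* An element x = sum_k x_k T^k of Lambda_wedge (coefficients x_k in Z_l) is
   represented by its system of reductions modulo l^n:
     lw n k  = the residue of x_k modulo l^n, as an integer in [0, l^n).
   Z_l = lim Z/l^n, so such a compatible system is exactly a family (x_k)_k of
   l-adic integers; "x_k -> 0 as k -> -oo" means that for every n, x_k = 0 mod
   l^n for all sufficiently negative k. *)
Definition lcoefs := nat -> int -> int.

Definition modl (l n : nat) (a : int) : int := (a %% (l ^ n)%N%:Z)%Z.

Definition is_Lwedge (l : nat) (x : lcoefs) : Prop :=
  [/\ (forall n k, 0 <= x n k < (l ^ n)%N%:Z),
      (forall n k, modl l n (x n.+1 k) = x n k) &
      (forall n, exists K : int, forall k, k < K -> x n k = 0)].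

(* Lambda = Z_l[[T]] inside Lambda_wedge: no negative powers of T. *)
Definition is_Lambda (l : nat) (x : lcoefs) : Prop :=
  is_Lwedge l x /\ (forall n k, k < 0 -> x n k = 0).

(* psi(T) = (1+T)^l - 1 = T^l (1 + l U(T^-1)), with
   U(S) = sum_{i=1}^{l-1} (C(l,i)/l) S^(l-i). *)
Definition psiT (l : nat) : {poly int} := ('X + 1) ^+ l - 1.

Definition Upoly (l : nat) : {poly int} :=
  \sum_(1 <= i < l) ('C(l, i) %/ l)%N%:Z *: 'X^(l - i).

(* V_n(S) = sum_{i<n} (-l U(S))^i, so that (1 + l U) V_n = 1 mod l^n, hence
   psi(T)^{-1} = T^{-l} V_n(T^{-1})  modulo l^n  in Lambda_wedge. *)
Definition Vpoly (l n : nat) : {poly int} :=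
  \sum_(i < n) (- (l%:Z *: Upoly l)) ^+ i.

(* psi_coef l n k m = coefficient of T^m in psi(T)^k, modulo l^n
   (for k = -j < 0:  psi(T)^{-j} = T^{-l j} V_n(T^{-1})^j  mod l^n). *)
Definition psi_coef (l n : nat) (k m : int) : int :=
  match k with
  | Posz j => if m is Posz m' then (psiT l ^+ j)`_m' else 0
  | Negz j' =>
      let j := j'.+1 in
      match (- ((l * j)%N%:Z) - m) with
      | Posz d => (Vpoly l n ^+ j)`_d
      | Negz _ => 0
      end
  end.

(* psi(x) = sum_k x_k psi(T)^k, computed modulo l^n.  The coefficient of T^m in
   psi(T)^k (mod l^n) vanishes unless k lies between m and 0, so the sum
   over k in [-|m|, |m|] is the full (finite, mod l^n) sum. *)
Definition psi (l : nat) (x : lcoefs) : lcoefs := fun n m =>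
  modl l n (\sum_(i < (2 * absz m).+1)
              x n (i%:Z - (absz m)%:Z) * psi_coef l n (i%:Z - (absz m)%:Z) m).

Definition l_minus_psi (l : nat) (x : lcoefs) : lcoefs := fun n m =>
  modl l n (l%:Z * x n m - psi l x n m).

From HB Require Import structures.
From mathcomp Require Import all_boot all_order all_algebra.
Import Order.TTheory GRing.Theory Num.Theory.
Set Implicit Arguments. Unset Strict Implicit.
Local Open Scope ring_scope.

(* The whole argument rests on one triangularity property of psi: the
   coefficient of T^m (m < 0) in psi(T)^k vanishes unless k < 0 and
   l |k| <= |m|.  Hence the negative coefficients of psi(x) only involve
   negative coefficients of x of strictly smaller index (as l >= 2).

   (⊆) If (l - psi) x has no negative coefficients, strong induction on |k|
       shows x_k = 0 for k < 0: by induction psi(x)_k = 0, so l x_k = 0 modulo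
       l^(n+1), i.e. x_k = 0 modulo l^n.
   (⊇) For x in Lambda, (l - psi) x again has no negative coefficients, and its
       residues are compatible because, for k >= 0, the residue of psi(T)^k does
       not depend on the modulus. *)

Lemma modz_dvd_mod (a d e : int) : (d %| e)%Z -> ((a %% e)%Z = a %[mod d])%Z.
Proof. by move=> /dvdzP [c ->]; rewrite [in RHS](divz_eq a (c * d)) mulrA modzMDl. Qed.

Lemma dvdz_expS (l n : nat) : ((l ^ n)%N%:Z %| (l ^ n.+1)%N%:Z)%Z.
Proof. by rewrite expnS PoszM dvdz_mull. Qed.

Lemma modz_sum_congr (I : Type) (r : seq I) (d : int) (F G : I -> int) :
  (forall i, (F i = G i %[mod d])%Z) ->
  (\sum_(i <- r) F i = \sum_(i <- r) G i %[mod d])%Z.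
Proof.
move=> FG; apply: (big_ind2 (fun a b => (a = b %[mod d])%Z)) => //.
by move=> a1 a2 b1 b2 e1 e2; rewrite -modzDm e1 e2 modzDm.
Qed.

Lemma psi_coef_vanish (l n : nat) (k m : int) :
  m < 0 -> (0 <= k) || (absz m < l * absz k)%N -> psi_coef l n k m = 0.
Proof.
case: k => [j|j']; case: m => [m'|m'] //= _ small.
case E: (- _ - _) => [d|d] //; move: E; rewrite NegzE opprK => E.
suff : (Posz d < 0)%R by [].
by rewrite -E addrC subr_lt0 ltz_nat.
Qed.

Lemma psi_negative_coef (l : nat) (x : lcoefs) (n : nat) (m : int) : m < 0 ->
  (forall k : int, k < 0 -> (l * absz k <= absz m)%N -> x n k = 0) ->
  psi l x n m = 0.
Proof.
move=> m_lt0 x0; rewrite /psi big1 ?/modl ?mod0z // => i _.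
set k := (_ - _).
have [k_ge0 | k_lt0] := leP 0 k; first by rewrite psi_coef_vanish ?k_ge0 ?mulr0.
have [k_small | k_big] := leqP (l * absz k)%N (absz m); first by rewrite x0 ?mul0r.
by rewrite psi_coef_vanish ?k_big ?orbT ?mulr0.
Qed.

Lemma preimage_no_negative (l : nat) (x : lcoefs) : (1 < l)%N -> is_Lwedge l x ->
  (forall n m, m < 0 -> l_minus_psi l x n m = 0) ->
  forall n k, k < 0 -> x n k = 0.
Proof.
move=> l_gt1 [_ compat _] image0 n k k_lt0.
have -> : k = - (absz k)%:Z by rewrite abszE ltr0_norm ?opprK.
have : (0 < absz k)%N by rewrite absz_gt0 ltr0_neq0.
move: (absz k) n => {k k_lt0}; elim/ltn_ind => a IH n a_gt0.
have psi0 : psi l x n.+1 (- a%:Z) = 0.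
  apply: psi_negative_coef; first by rewrite oppr_lt0 ltz_nat.
  move=> k k_lt0 k_small.
  have k_gt0 : (0 < absz k)%N by rewrite absz_gt0 ltr0_neq0.
  have -> : k = - (absz k)%:Z by rewrite abszE ltr0_norm ?opprK.
  apply: IH => //; rewrite abszN /= in k_small; apply: leq_trans k_small.
  by rewrite ltn_Pmull.
have := image0 n.+1 (- a%:Z); rewrite oppr_lt0 ltz_nat a_gt0 => /(_ isT).
rewrite /l_minus_psi psi0 subr0 /modl => /dvdz_mod0P.
rewrite expnS PoszM dvdz_mul2l; last by rewrite eqz_nat -lt0n ltnW.
by move=> /dvdz_mod0P lx0; rewrite -compat /modl lx0.
Qed.

Lemma psi_Lambda_negative (l : nat) (x : lcoefs) (n : nat) (m : int) :
  is_Lambda l x -> m < 0 -> psi l x n m = 0.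
Proof. by move=> [_ x0] m_lt0; apply: psi_negative_coef => // k k_lt0 _; apply: x0. Qed.

Lemma psi_Lambda_compat (l : nat) (x : lcoefs) (n : nat) (m : int) :
  is_Lambda l x -> (psi l x n.+1 m = psi l x n m %[mod (l ^ n)%N%:Z])%Z.
Proof.
move=> [[_ compat _] x0].
rewrite /psi /modl modz_dvd_mod ?dvdz_expS // modz_mod.
apply: modz_sum_congr => i; case: (_ - _) => [j | j]; last by rewrite !x0 ?mul0r.
by rewrite -modzMml -(compat n).
Qed.

Lemma l_minus_psi_Lambda (l : nat) (x : lcoefs) :
  (0 < l)%N -> is_Lambda l x -> is_Lambda l (l_minus_psi l x).
Proof.
move=> l_gt0 xL; have [[_ compat _] x0] := xL.
have negative0 n m : m < 0 -> l_minus_psi l x n m = 0.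
  move=> m_lt0; rewrite /l_minus_psi x0 // psi_Lambda_negative //.
  by rewrite mulr0 subr0 /modl mod0z.
have modulus_pos n : 0 < (l ^ n)%N%:Z by rewrite ltz_nat expn_gt0 l_gt0.
split; last exact: negative0.
split; last by move=> n; exists 0 => k; apply: negative0.
- by move=> n k; rewrite /l_minus_psi /modl modz_ge0 ?ltz_pmod ?gt_eqF.
- move=> n m; rewrite /l_minus_psi /modl modz_dvd_mod ?dvdz_expS //.
  have x_compat : (x n.+1 m = x n m %[mod (l ^ n)%N%:Z])%Z.
    by rewrite -(compat n m) /modl modz_mod.
  rewrite -modzDm -modzNm -modzMmr x_compat (psi_Lambda_compat n m xL).
  by rewrite modzMmr modzNm modzDm.
Qed.

Lemma is_Lambda_ext (l : nat) (x y : lcoefs) :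
  (forall n m, x n m = y n m) -> is_Lambda l x -> is_Lambda l y.
Proof.
move=> xy [[bound compat vanish] x0]; split; last by move=> n k; rewrite -xy; apply: x0.
split=> [n k | n k | n]; rewrite -?xy //.
by have [K xK] := vanish n; exists K => k kK; rewrite -xy xK.
Qed.

Theorem mainTheorem5 (l : nat) (hl : prime l) (hodd : odd l) (y : lcoefs) :
  (is_Lambda l y /\
     exists x, is_Lwedge l x /\ (forall n m, y n m = l_minus_psi l x n m))
  <->
  (exists x, is_Lambda l x /\ (forall n m, y n m = l_minus_psi l x n m)).
Proof.
have l_gt1 := prime_gt1 hl.
split.
- move=> [[_ y0] [x [xW yx]]]; exists x; split => //; split => //.
  by apply: (preimage_no_negative l_gt1 xW) => n m m_lt0; rewrite -yx y0.
- move=> [x [xL yx]]; split.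
    by apply: is_Lambda_ext (l_minus_psi_Lambda (ltnW l_gt1) xL) => n m; rewrite yx.
  by exists x; split => //; case: xL.
Qed.
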